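(* Let $g \geq 1$, let $A \subseteq [N]$ be a nonempty $B_3[g]$-set, let $0 < \delta < \tfrac14$, let $l = \lfloor \frac{1}{2\delta} \rfloor$, and suppose $N > \frac{2}{\delta}$. For $1 \leq k \leq l$ let \[ C_k = \bigl( A \cap ((k-1)\delta N,\, k\delta N] \bigr) \cup \bigl( A \cap [(1-k\delta)N,\, (1-(k-1)\delta)N) \bigr), \] and define $\alpha_k(\delta)$ by $\alpha_k(\delta)|A| = |C_k|$. Then for every $1 \leq k \leq l$, \[ \alpha_k(\delta)^3 |A|^3 \leq 72\, g\, \delta N, \] i.e. whenever $\alpha_k(\delta) > 0$, $|A| \leq \left( \frac{72 g \delta N}{\alpha_k(\delta)^3}\right)^{1/3}$.
   Context: $[N] = \{1,2,\dots,N\}$. For positive integers $h,g$, a set $A \subseteq [N]$ is a $B_h[g]$-set if for every integer $n$ there are at most $g$ distinct multisets $\{a_1,\dots,a_h\}$ of size $h$ with all $a_i \in A$ and $a_1 + \dots + a_h = n$. *)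

From Stdlib Require Import Reals Lra Lia Arith List Bool.
Import ListNotations.
Open Scope R_scope.

Definition Rleb (x y : R) : bool := if Rle_dec x y then true else false.
Definition Rltb (x y : R) : bool := if Rlt_dec x y then true else false.

(* A finite set A ⊆ [N] is represented by a duplicate-free list of naturals,
   all lying in {1,...,N}. *)
Definition subset_interval (N : nat) (A : list nat) : Prop :=
  NoDup A /\ forall a, In a A -> (1 <= a <= N)%nat.

(* Number of multisets {a1,a2,a3} of elements of A with a1+a2+a3 = n:
   counted as sorted triples a1 <= a2 <= a3 (A has no duplicates). *)
Definition rep3 (A : list nat) (n : nat) : nat :=
  length (filter (fun t : nat * nat * nat =>
            let '(a, b, c) := t in
            (a <=? b)%nat && (b <=? c)%nat && (a + b + c =? n)%nat)
          (list_prod (list_prod A A) A)).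

Definition B3g_set (N g : nat) (A : list nat) : Prop :=
  subset_interval N A /\ forall n : nat, (rep3 A n <= g)%nat.

Definition ell (delta : R) : nat := Z.to_nat (Int_part (/ (2 * delta))).

Definition C_k (N : nat) (A : list nat) (delta : R) (k : nat) : list nat :=
  filter (fun a : nat =>
     (Rltb ((INR k - 1) * delta * INR N) (INR a)
        && Rleb (INR a) (INR k * delta * INR N))
     || (Rleb ((1 - INR k * delta) * INR N) (INR a)
        && Rltb (INR a) ((1 - (INR k - 1) * delta) * INR N))) A.

Definition alpha_k (N : nat) (A : list nat) (delta : R) (k : nat) : R :=
  INR (length (C_k N A delta k)) / INR (length A).

(* The set C_k lies in two intervals of length x = δN, so c = |C_k| <= 2x + 2,
   and a sum of three of its elements lies in one of four intervals of length 3x,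
   according to how many summands come from the lower interval; hence such sums
   take at most 4(3x + 1) values.  Since A is a B_3[g]-set, each value is the sum
   of at most g multisets, while C_k has at least (c^3 + 3c^2)/6 multisets of size
   three.  Comparing the two counts gives c^3 <= 72 g x. *)

From Stdlib Require Import Reals List Lra Lia Arith Bool ZArith.
Import ListNotations.
Open Scope R_scope.

Fixpoint lsum {T : Type} (f : T -> nat) (l : list T) : nat :=
  match l with [] => 0 | x :: l' => f x + lsum f l' end%nat.

Lemma lsum_ext_in {T : Type} (f g : T -> nat) l :
  (forall x, In x l -> f x = g x) -> lsum f l = lsum g l.
Proof. induction l as [|x l IH]; simpl; intros H; [reflexivity | f_equal; auto]. Qed.

Lemma lsum_le {T : Type} (f g : T -> nat) l :
  (forall x, (f x <= g x)%nat) -> (lsum f l <= lsum g l)%nat.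
Proof. intros H; induction l as [|x l IH]; simpl; [lia | specialize (H x); lia]. Qed.

Lemma lsum_add {T : Type} (f g : T -> nat) l :
  lsum (fun x => f x + g x)%nat l = (lsum f l + lsum g l)%nat.
Proof. induction l; simpl; lia. Qed.

Lemma lsum_const {T : Type} (c : nat) (l : list T) :
  lsum (fun _ => c) l = (c * length l)%nat.
Proof. induction l; simpl; lia. Qed.

Lemma lsum_mul {T : Type} (k : nat) (f : T -> nat) l :
  lsum (fun x => k * f x)%nat l = (k * lsum f l)%nat.
Proof. induction l; simpl; lia. Qed.

Lemma lsum_app {T : Type} (f : T -> nat) l1 l2 :
  lsum f (l1 ++ l2) = (lsum f l1 + lsum f l2)%nat.
Proof. induction l1; simpl; lia. Qed.

Lemma lsum_map {T U : Type} (f : U -> nat) (h : T -> U) l :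
  lsum f (map h l) = lsum (fun x => f (h x)) l.
Proof. induction l; simpl; congruence. Qed.

Lemma lsum_swap {T U : Type} (f : T -> U -> nat) l1 l2 :
  lsum (fun a => lsum (f a) l2) l1 = lsum (fun b => lsum (fun a => f a b) l1) l2.
Proof.
  induction l1 as [|a l1 IH]; simpl.
  - induction l2; simpl; auto.
  - rewrite IH, <- lsum_add. reflexivity.
Qed.

Lemma lsum_list_prod {T U : Type} (f : T * U -> nat) l1 l2 :
  lsum f (list_prod l1 l2) = lsum (fun a => lsum (fun b => f (a, b)) l2) l1.
Proof. induction l1; simpl; auto. rewrite lsum_app, lsum_map; congruence. Qed.

Lemma length_filter_lsum {T : Type} (p : T -> bool) l :
  length (filter p l) = lsum (fun x => if p x then 1 else 0)%nat l.
Proof. induction l as [|x l IH]; simpl; auto. destruct (p x); simpl; auto. Qed.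

Lemma lsum_filter_le {T : Type} (p : T -> bool) (f g : T -> nat) l :
  (forall x, (f x <= g x)%nat) -> (lsum f (filter p l) <= lsum g l)%nat.
Proof.
  intros H; induction l as [|x l IH]; simpl; auto.
  specialize (H x); destruct (p x); simpl; lia.
Qed.

Lemma length_filter_filter_le {T : Type} (p q : T -> bool) l :
  (length (filter p (filter q l)) <= length (filter p l))%nat.
Proof.
  induction l as [|x l IH]; simpl; auto.
  destruct (q x), (p x) eqn:Hp; simpl; rewrite ?Hp; simpl; lia.
Qed.

Lemma filter_filter {T : Type} (p q : T -> bool) l :
  filter p (filter q l) = filter (fun x => q x && p x) l.
Proof.
  induction l as [|x l IH]; simpl; auto.
  destruct (q x), (p x) eqn:Hp; simpl; rewrite ?Hp; congruence.
Qed.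

Lemma lsum_eqb_NoDup (C : list nat) a :
  NoDup C -> In a C -> lsum (fun b => if a =? b then 1 else 0)%nat C = 1%nat.
Proof.
  induction C as [|x C IH]; simpl; intros ND Hin; [contradiction|].
  inversion_clear ND as [|? ? Hx ND'].
  destruct Hin as [->|Hin].
  - rewrite Nat.eqb_refl, (lsum_ext_in _ (fun _ => 0%nat)), lsum_const; [lia|].
    intros y Hy; destruct (Nat.eqb_spec a y); subst; tauto.
  - destruct (Nat.eqb_spec a x); subst; [contradiction | auto].
Qed.

Lemma length_le_mul_fibers {T : Type} (f : T -> nat) (B : nat) (S : list nat) :
  forall L : list T, (forall t, In t L -> In (f t) S) ->
  (forall n, (length (filter (fun t => f t =? n) L) <= B)%nat) ->
  (length L <= B * length S)%nat.
Proof.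
  induction S as [|n S IH]; intros L HS Hfib.
  - destruct L as [|t L]; simpl; [lia | destruct (HS t (or_introl eq_refl))].
  - rewrite <- (filter_length (fun t => f t =? n) L). simpl length.
    enough ((length (filter (fun t => negb (f t =? n)) L) <= B * length S)%nat)
      by (specialize (Hfib n); lia).
    apply IH.
    + intros t Ht; apply filter_In in Ht as [Ht Hn].
      destruct (HS t Ht) as [E|]; auto.
      rewrite E, Nat.eqb_refl in Hn; discriminate.
    + intros m. eapply Nat.le_trans; [apply length_filter_filter_le | apply Hfib].
Qed.

Definition triples (C : list nat) : list (nat * nat * nat) := list_prod (list_prod C C) C.

Definition sorted3 (t : nat * nat * nat) : bool :=
  let '(a, b, c) := t in (a <=? b) && (b <=? c).

Definition sum3 (t : nat * nat * nat) : nat := let '(a, b, c) := t in (a + b + c)%nat.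

Definition tsum (C : list nat) (h : nat -> nat -> nat -> nat) : nat :=
  lsum (fun a => lsum (fun b => lsum (h a b) C) C) C.

Lemma tsum_swap12 C h : tsum C (fun a b => h b a) = tsum C h.
Proof. exact (lsum_swap (fun a b => lsum (h b a) C) C C). Qed.

Lemma tsum_swap23 C h : tsum C (fun a b c => h a c b) = tsum C h.
Proof. apply lsum_ext_in; intros a _; exact (lsum_swap (fun b c => h a c b) C C). Qed.

Lemma tsum_add C h1 h2 :
  tsum C (fun a b c => h1 a b c + h2 a b c)%nat = (tsum C h1 + tsum C h2)%nat.
Proof.
  unfold tsum; rewrite <- lsum_add; apply lsum_ext_in; intros a _.
  rewrite <- lsum_add; apply lsum_ext_in; intros b _; apply lsum_add.
Qed.

Lemma tsum_le C h1 h2 :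
  (forall a b c, h1 a b c <= h2 a b c)%nat -> (tsum C h1 <= tsum C h2)%nat.
Proof. intros H; do 3 (apply lsum_le; intros). apply H. Qed.

Definition sorted_ind (a b c : nat) : nat := if sorted3 (a, b, c) then 1 else 0.
Definition eq_ind (a b : nat) : nat := if a =? b then 1 else 0.

Lemma length_sorted_triples C : length (filter sorted3 (triples C)) = tsum C sorted_ind.
Proof. unfold triples; rewrite length_filter_lsum, !lsum_list_prod; reflexivity. Qed.

Lemma sorted_orderings_ge a b c :
  (1 + eq_ind a b + eq_ind b c + eq_ind a c <=
   sorted_ind a b c + sorted_ind b a c + sorted_ind a c b
   + sorted_ind c b a + sorted_ind b c a + sorted_ind c a b)%nat.
Proof.
  unfold sorted_ind, eq_ind, sorted3.
  destruct (Nat.leb_spec a b), (Nat.leb_spec b a), (Nat.leb_spec a c),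
    (Nat.leb_spec c a), (Nat.leb_spec b c), (Nat.leb_spec c b),
    (Nat.eqb_spec a b), (Nat.eqb_spec b c), (Nat.eqb_spec a c); simpl; lia.
Qed.

Lemma tsum_eq_ind C :
  NoDup C -> tsum C (fun a b _ => eq_ind a b) = (length C * length C)%nat.
Proof.
  intros ND; unfold tsum.
  rewrite (lsum_ext_in _ (fun _ => length C)), lsum_const; [lia|].
  intros a Ha; rewrite (lsum_ext_in _ (fun b => length C * eq_ind a b)%nat).
  - unfold eq_ind; rewrite lsum_mul, lsum_eqb_NoDup; auto; lia.
  - intros b _; rewrite lsum_const; lia.
Qed.

(* Summing [sorted_orderings_ge] over [C^3]; the exact count of 3-multisets is
   [c(c+1)(c+2)/6]. *)
Lemma sorted_triples_lower C : NoDup C ->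
  (length C * length C * length C + 3 * (length C * length C)
   <= 6 * length (filter sorted3 (triples C)))%nat.
Proof.
  intros ND; rewrite length_sorted_triples.
  pose proof (tsum_le C _ _ sorted_orderings_ge) as H; rewrite !tsum_add in H.
  assert (P12 : tsum C (fun a b c => sorted_ind b a c) = tsum C sorted_ind)
    by apply tsum_swap12.
  assert (P23 : tsum C (fun a b c => sorted_ind a c b) = tsum C sorted_ind)
    by apply tsum_swap23.
  assert (P231 : tsum C (fun a b c => sorted_ind b c a) = tsum C sorted_ind)
    by (rewrite (tsum_swap12 C (fun a b c => sorted_ind a c b)); exact P23).
  assert (P312 : tsum C (fun a b c => sorted_ind c a b) = tsum C sorted_ind)
    by (rewrite (tsum_swap23 C (fun a b c => sorted_ind b a c)); exact P12).
  assert (P321 : tsum C (fun a b c => sorted_ind c b a) = tsum C sorted_ind)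
    by (rewrite (tsum_swap12 C (fun a b c => sorted_ind c a b)); exact P312).
  assert (E12 : tsum C (fun a b _ => eq_ind a b) = (length C * length C)%nat)
    by (apply tsum_eq_ind; exact ND).
  assert (E13 : tsum C (fun a _ c => eq_ind a c) = (length C * length C)%nat)
    by (rewrite (tsum_swap23 C (fun a b _ => eq_ind a b)); exact E12).
  assert (E23 : tsum C (fun _ b c => eq_ind b c) = (length C * length C)%nat)
    by (rewrite (tsum_swap12 C (fun a _ c => eq_ind a c)); exact E13).
  assert (T1 : tsum C (fun _ _ _ => 1%nat) = (length C * length C * length C)%nat).
  { unfold tsum; rewrite (lsum_ext_in _ (fun _ => length C * length C)%nat).
    { rewrite lsum_const; lia. }
    intros; rewrite (lsum_ext_in _ (fun _ => length C)), !lsum_const; [lia|].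
    intros; rewrite lsum_const; lia. }
  lia.
Qed.

Lemma rep3_sorted3_sum3 A n :
  rep3 A n = length (filter (fun t => sum3 t =? n) (filter sorted3 (triples A))).
Proof.
  unfold rep3, triples; rewrite filter_filter; f_equal.
  apply filter_ext; intros [[a b] c]; reflexivity.
Qed.

Lemma rep3_filter_le (p : nat -> bool) A n : (rep3 (filter p A) n <= rep3 A n)%nat.
Proof.
  unfold rep3; rewrite !length_filter_lsum, !lsum_list_prod.
  apply lsum_filter_le; intros a; apply lsum_filter_le; intros b.
  apply lsum_filter_le; intros c; lia.
Qed.

Lemma nat_list_min_max (L : list nat) : L <> [] ->
  exists m M, In m L /\ In M L /\ forall a, In a L -> (m <= a <= M)%nat.
Proof.
  induction L as [|x L IH]; intros HL; [congruence|].
  destruct L as [|y L].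
  - exists x, x; simpl; intuition (subst; lia).
  - destruct IH as (m & M & Hm & HM & H); [congruence|].
    exists (Nat.min x m), (Nat.max x M); split; [|split].
    + destruct (Nat.min_spec x m) as [[_ ->]|[_ ->]]; [left | right]; auto.
    + destruct (Nat.max_spec x M) as [[_ ->]|[_ ->]]; [right | left]; auto.
    + intros a [->|Ha]; [lia | specialize (H a Ha); lia].
Qed.

Lemma NoDup_nat_interval_length (L : list nat) (u W : R) : 0 <= W -> NoDup L ->
  (forall a, In a L -> u <= INR a <= u + W) -> INR (length L) <= W + 1.
Proof.
  intros HW ND H; destruct L as [|a0 L]; [simpl; lra|].
  destruct (nat_list_min_max (a0 :: L)) as (m & M & Hm & HM & Hb); [congruence|].
  assert (Hlen : (length (a0 :: L) <= length (seq m (S (M - m))))%nat).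
  { apply NoDup_incl_length; auto; intros a Ha; apply in_seq; specialize (Hb a Ha); lia. }
  apply le_INR in Hlen; rewrite length_seq, S_INR, minus_INR in Hlen
    by (specialize (Hb m Hm); lia).
  pose proof (H m Hm); pose proof (H M HM); lra.
Qed.

Lemma nat_interval_cover (u W : R) : 0 <= W ->
  exists S, (forall n, u <= INR n <= u + W -> In n S) /\ INR (length S) <= W + 1.
Proof.
  intros HW; set (bound := Z.to_nat (up (u + W))).
  set (inI := fun n => Rleb u (INR n) && Rleb (INR n) (u + W)).
  exists (filter inI (seq 0 bound)); split.
  - intros n Hn; apply filter_In; split.
    + apply in_seq; split; [lia|]; simpl.
      apply INR_lt; unfold bound; destruct (archimed (u + W)) as [Hup _].
      rewrite (INR_IZR_INZ (Z.to_nat _)), Z2Nat.id; [lra|].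
      apply le_IZR; pose proof (pos_INR n); lra.
    + unfold inI, Rleb; destruct (Rle_dec u (INR n)), (Rle_dec (INR n) (u + W));
        simpl; auto; lra.
  - apply (NoDup_nat_interval_length _ u); auto.
    + apply NoDup_filter, seq_NoDup.
    + intros a Ha; apply filter_In in Ha as [_ Ha]; unfold inI, Rleb in Ha.
      destruct (Rle_dec u (INR a)), (Rle_dec (INR a) (u + W)); simpl in Ha;
        lra || discriminate.
Qed.

Section TwoBlocks.

Variables (C : list nat) (p1 p2 x : R).
Hypothesis x_ge0 : 0 <= x.
Hypothesis C_blocks :
  forall a, In a C -> p1 <= INR a <= p1 + x \/ p2 <= INR a <= p2 + x.

Lemma NoDup_two_blocks_length : NoDup C -> INR (length C) <= 2 * x + 2.
Proof.
  intros ND.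
  destruct (nat_interval_cover p1 x x_ge0) as [S1 [HS1 L1]].
  destruct (nat_interval_cover p2 x x_ge0) as [S2 [HS2 L2]].
  assert (Hlen : (length C <= length (S1 ++ S2))%nat).
  { apply NoDup_incl_length; auto; intros a Ha; apply in_or_app.
    destruct (C_blocks a Ha); auto. }
  apply le_INR in Hlen; rewrite length_app, plus_INR in Hlen; lra.
Qed.

(* A sum of three elements of [C] is determined up to [3x] by how many of them
   lie in the first block, which leaves four possibilities. *)
Lemma sum3_cover : exists S,
  (forall t, In t (triples C) -> In (sum3 t) S) /\ INR (length S) <= 4 * (3 * x + 1).
Proof.
  assert (H3x : 0 <= 3 * x) by lra.
  destruct (nat_interval_cover (3 * p1) _ H3x) as [S0 [H0 L0]].
  destruct (nat_interval_cover (2 * p1 + p2) _ H3x) as [S1 [H1 L1]].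
  destruct (nat_interval_cover (p1 + 2 * p2) _ H3x) as [S2 [H2 L2]].
  destruct (nat_interval_cover (3 * p2) _ H3x) as [S3 [H3 L3]].
  exists (S0 ++ S1 ++ S2 ++ S3); split.
  - intros [[a b] c] Ht; unfold triples in Ht.
    apply in_prod_iff in Ht as [Ht Hc]; apply in_prod_iff in Ht as [Ha Hb].
    simpl; rewrite !in_app_iff.
    destruct (C_blocks a Ha), (C_blocks b Hb), (C_blocks c Hc);
      [left; apply H0 | right; left; apply H1 | right; left; apply H1
      | right; right; left; apply H2 | right; left; apply H1
      | right; right; left; apply H2 | right; right; left; apply H2
      | right; right; right; apply H3]; rewrite !plus_INR; lra.
  - rewrite !length_app, !plus_INR; lra.
Qed.

Lemma sorted_triples_upper (g : nat) : (forall n, (rep3 C n <= g)%nat) ->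
  INR (length (filter sorted3 (triples C))) <= INR g * (4 * (3 * x + 1)).
Proof.
  intros Hrep; destruct sum3_cover as [S [HS LS]].
  assert (H : (length (filter sorted3 (triples C)) <= g * length S)%nat).
  { apply (length_le_mul_fibers sum3).
    - intros t Ht; apply filter_In in Ht as [Ht _]; auto.
    - intros n; rewrite <- rep3_sorted3_sum3; auto. }
  apply le_INR in H; rewrite mult_INR in H.
  eapply Rle_trans; [exact H|]; apply Rmult_le_compat_l; [apply pos_INR | exact LS].
Qed.

End TwoBlocks.

Lemma cubic_count_bound (c G x T : R) :
  0 <= G -> 1 <= x -> 0 <= c -> c <= 2 * x + 2 ->
  T <= G * (4 * (3 * x + 1)) -> c * c * c + 3 * (c * c) <= 6 * T ->
  c * c * c <= 72 * G * x.
Proof.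
  intros HG Hx Hc Hcx Hup Hlow.
  (* Either [3c^2] absorbs the constant [24G], or [c^2 < 8G] and [c^3] is small. *)
  destruct (Rle_lt_dec (8 * G) (c * c)) as [Hbig|Hsmall].
  - lra.
  - assert (c * (c * c) <= c * (8 * G)) by (apply Rmult_le_compat_l; lra).
    assert (c * (8 * G) <= (2 * x + 2) * (8 * G)) by (apply Rmult_le_compat_r; lra).
    nra.
Qed.

Lemma C_k_blocks N A delta k a : In a (C_k N A delta k) ->
  (INR k - 1) * delta * INR N <= INR a <= (INR k - 1) * delta * INR N + delta * INR N
  \/ (1 - INR k * delta) * INR N <= INR a
     <= (1 - INR k * delta) * INR N + delta * INR N.
Proof.
  unfold C_k, Rltb, Rleb; intros Ha; apply filter_In in Ha as [_ Ha].
  repeat match type of Ha with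
  | context [Rlt_dec ?u ?v] => destruct (Rlt_dec u v)
  | context [Rle_dec ?u ?v] => destruct (Rle_dec u v)
  end; simpl in Ha; try discriminate; first [left; lra | right; lra].
Qed.

Theorem lemma2p2 (N g : nat) (A : list nat) (delta : R) (k : nat) :
  (1 <= g)%nat ->
  B3g_set N g A ->
  A <> nil ->
  0 < delta < / 4 ->
  INR N > 2 / delta ->
  (1 <= k <= ell delta)%nat ->
  (alpha_k N A delta k) ^ 3 * (INR (length A)) ^ 3 <= 72 * INR g * delta * INR N.
Proof.
  (* The bound holds for every k. *)
  intros _ [[NDA _] Hrep] HA [Hdelta _] HN _.
  assert (Hx : 1 <= delta * INR N).
  { apply (Rmult_gt_compat_l delta) in HN; auto.
    replace (delta * (2 / delta)) with 2 in HN by (field; lra); lra. }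
  set (C := C_k N A delta k).
  assert (NDC : NoDup C) by (apply NoDup_filter; exact NDA).
  pose proof (C_k_blocks N A delta k) as Hblocks; fold C in Hblocks.
  pose proof (NoDup_two_blocks_length C _ _ (delta * INR N) ltac:(lra) Hblocks NDC) as Hc.
  pose proof (sorted_triples_upper C _ _ (delta * INR N) ltac:(lra) Hblocks g
    (fun n => Nat.le_trans _ _ _ (rep3_filter_le _ A n) (Hrep n))) as Hup.
  pose proof (le_INR _ _ (sorted_triples_lower C NDC)) as Hlow.
  rewrite !plus_INR, !mult_INR in Hlow; simpl (INR 3) in Hlow; simpl (INR 6) in Hlow.
  assert (HA0 : INR (length A) <> 0)
    by (apply not_0_INR; destruct A; [congruence | discriminate]).
  unfold alpha_k; fold C.
  replace ((INR (length C) / INR (length A)) ^ 3 * INR (length A) ^ 3)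
    with (INR (length C) * INR (length C) * INR (length C)) by (field; exact HA0).
  replace (72 * INR g * delta * INR N) with (72 * INR g * (delta * INR N)) by ring.
  apply (cubic_count_bound _ _ _ _ (pos_INR g) Hx (pos_INR _) Hc Hup); lra.
Qed.
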